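(* For every $e\in\mathrm{Exp}$, $$e\equiv \mathrm{GS}_{\alpha\in\mathrm{At}}\Big(\bigoplus_{d\in\mathrm{supp}(\partial(e)_\alpha)}\partial(e)_\alpha(d)\cdot\exp(d)\Big),$$ where $\exp:\{\mathsf{acc},\mathsf{rej}\}+\mathrm{Out}+\mathrm{Act}\times\mathrm{Exp}\to\mathrm{Exp}$ is given by $\exp(\mathsf{rej})=\mathtt 0$, $\exp(\mathsf{acc})=\mathtt 1$, $\exp(v)=v$ for $v\in\mathrm{Out}$, and $\exp(p,f)=p;f$.
   Context: Fix a finite set $T$ of primitive tests, a set $\mathrm{Act}$ of atomic actions, a set $\mathrm{Out}$ of return values, and a semiring $(S,+,\cdot,0,1)$ that is positive ($x+y=0\Rightarrow x=y=0$), refinement (whenever $x+y=z+w$ there exist $s,t,u,v$ with $s+t=x$, $s+u=z$, $u+v=y$, $t+v=w$) and Conway (with ${}^*:S\to S$ satisfying $(a+b)^*=a^*(ba^* )^*$, $(ab)^*=1+a(ba)^*b$). Tests: $b,c\in\mathrm{BExp}::=\mathtt{0}\mid\mathtt{1}\mid t\ (t\in T)\mid\bar b\mid b+c\mid bc$ ($\mathtt 0,\mathtt 1$ false/true, distinct from semiring $0,1$); $\equiv_{BA}$ is Boolean equivalence; $\mathrm{At}$ is the finite set of atoms of the free Boolean algebra on $T$, atoms also regarded as tests; $\alpha\le b$ means $\alpha$ entails $b$. Expressions: $e,f\in\mathrm{Exp}::= p\in\mathrm{Act}\mid b\in\mathrm{BExp}\mid e+_b f\mid e;f\mid e^{(b)}\mid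 v\in\mathrm{Out}\mid e\oplus_{r,s} f\ (r,s\in S)$; $\odot r:=\mathtt 1\oplus_{r,0}\mathtt 0$. $\mathcal M_\omega(X)$: finitely supported maps $X\to S$, pointwise operations; $\delta_x$ indicator of $x$; $\mathrm{supp}(\nu)=\{x:\nu(x)\neq0\}$. The derivative $\partial:\mathrm{Exp}\to\mathcal M_\omega(\{\mathsf{acc},\mathsf{rej}\}+\mathrm{Out}+\mathrm{Act}\times\mathrm{Exp})^{\mathrm{At}}$: $\partial(b)_\alpha=\delta_{\mathsf{acc}}$ if $\alpha\le b$, else $\delta_{\mathsf{rej}}$; $\partial(v)_\alpha=\delta_v$; $\partial(p)_\alpha=\delta_{(p,\mathtt 1)}$; $\partial(e+_bf)_\alpha=\partial(e)_\alpha$ if $\alpha\le b$, else $\partial(f)_\alpha$; $\partial(e\oplus_{r,s}f)_\alpha=r\partial(e)_\alpha+s\partial(f)_\alpha$; $\partial(e;f)_\alpha=\sum_x\partial(e)_\alpha(x)c_{\alpha,f}(x)$ with $c_{\alpha,f}(\mathsf{acc})=\partial(f)_\alpha$, $c_{\alpha,f}(x)=\delta_x$ for $x\in\{\mathsf{rej}\}\cup\mathrm{Out}$, $c_{\alpha,f}(p,e')=\delta_{(p,e';f)}$; $\partial(e^{(b)})_\alpha(x)$ is $1$ if $x=\mathsf{acc}$ and $\alpha\le\bar b$; $\partial(e)_\alpha(\mathsf{acc})^*\partial(e)_\alpha(x)$ if $x\in\{\mathsf{rej}\}\cup\mathrm{Out}$ and $\alpha\le b$; $\partial(e)_\alpha(\mathsf{acc})^*\partial(e)_\alpha(p,e')$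 if $x=(p,e';e^{(b)})$ and $\alpha\le b$; $0$ otherwise. Generalized guarded sum over $\Phi\subseteq\mathrm{At}$: $\mathrm{GS}_{\alpha\in\emptyset}e_\alpha:=\mathtt 0$ and $\mathrm{GS}_{\alpha\in\Phi}e_\alpha:=e_\gamma+_\gamma\mathrm{GS}_{\alpha\in\Phi\setminus\{\gamma\}}e_\alpha$ for some $\gamma\in\Phi$. Generalized weighted sum: $\bigoplus_{i\in I}r_i\cdot e_i:=e_j\oplus_{r_j,1}\big(\bigoplus_{i\in I\setminus\{j\}}r_i\cdot e_i\big)$ for some $j\in I$, the empty weighted sum being $\odot0$. Both are well defined up to $\equiv$. $E:\mathrm{Exp}\to S^{\mathrm{At}}$: $E(p)_\alpha=E(v)_\alpha=0$; $E(b)_\alpha=1$ if $\alpha\le b$ else $0$; $E(e\oplus_{r,s}f)_\alpha=rE(e)_\alpha+sE(f)_\alpha$; $E(e+_bf)_\alpha=E(e)_\alpha$ if $\alpha\le b$ else $E(f)_\alpha$; $E(e;f)_\alpha=E(e)_\alpha E(f)_\alpha$; $E(e^{(b)})_\alpha=E(\bar b)_\alpha$. The relation $\equiv$ is the smallest congruence on $\mathrm{Exp}$ (tests taken up to $\equiv_{BA}$; sequencing binds tighter than $\oplus$, $\odot$ binds tightest) containing, for all $e,f,g\in\mathrm{Exp}$, tests $b,c$, $v\in\mathrm{Out}$, $r,s,t,u\in S$: (G1) $e+_be\equiv e$; (G2) $e+_bf\equiv b;e+_bf$; (G3) $e+_bf\equiv f+_{\bar b}e$; (G4) $(e+_bf)+_cg\equiv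 e+_{bc}(f+_cg)$; (D1) $e\oplus_{r,s}(f+_bg)\equiv(e\oplus_{r,s}f)+_b(e\oplus_{r,s}g)$; (D2) $e\oplus_{r,s}(f\oplus_{t,u}g)\equiv e\oplus_{r,1}(f\oplus_{st,su}g)$; (D3) $b;(e\oplus_{r,s}f)\equiv b;(b;e\oplus_{r,s}b;f)$; (S1) $\mathtt 1;e\equiv e\equiv e;\mathtt 1$; (S2) $(e;f);g\equiv e;(f;g)$; (S3) $\mathtt 0;e\equiv\mathtt 0$; (S4) $(e\oplus_{r,s}f);g\equiv e;g\oplus_{r,s}f;g$; (S5) $(e+_bf);g\equiv e;g+_bf;g$; (S6) $v;e\equiv v$; (S7) $b;c\equiv bc$; (L1) $e^{(b)}\equiv e;e^{(b)}+_b\mathtt 1$; (C1) $\odot1\equiv\mathtt 1$; (C2) $\odot0;e\equiv\odot0$; (W1) $e\oplus_{r,s}e\equiv\odot(r+s);e$; (W2) $e\oplus_{r,s}f\equiv f\oplus_{s,r}e$; (W3) $e\oplus_{r,s}(f\oplus_{t,u}g)\equiv(e\oplus_{r,st}f)\oplus_{1,su}g$; (W4) $e\oplus_{ru,s}f\equiv(\odot u;e)\oplus_{r,s}f$; and closed under the rules (L2) if $e\equiv(f\oplus_{r,s}\mathtt 1)+_cg$ then $c;e^{(b)}\equiv c;((\odot(s^*r);f;e^{(b)})+_b\mathtt 1)$; (F1) if $g\equiv e;g+_bf$ and $E(e)_\alpha=0$ for all $\alpha\in\mathrm{At}$ then $g\equiv e^{(b)};f$. *)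

From HB Require Import structures.
From mathcomp Require Import all_boot all_order all_algebra.
Set Implicit Arguments. Unset Strict Implicit. Unset Printing Implicit Defensive.
Import GRing.Theory.
Local Open Scope ring_scope.

Section Tests.
Variable T : finType.

Inductive BExp : Type :=
| BFalse | BTrue | BPrim of T | BNeg of BExp | BOr of BExp & BExp | BAnd of BExp & BExp.

Fixpoint bexp_eqb (b c : BExp) : bool :=
  match b, c with
  | BFalse, BFalse => true
  | BTrue, BTrue => true
  | BPrim t, BPrim t' => t == t'
  | BNeg b, BNeg c => bexp_eqb b c
  | BOr b1 b2, BOr c1 c2 => bexp_eqb b1 c1 && bexp_eqb b2 c2
  | BAnd b1 b2, BAnd c1 c2 => bexp_eqb b1 c1 && bexp_eqb b2 c2
  | _, _ => false
  end.

Lemma bexp_eqP : Equality.axiom bexp_eqb.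
Proof.
elim=> [||t|b IH|b1 IH1 b2 IH2|b1 IH1 b2 IH2] [||t'|c|c1 c2|c1 c2] /=;
  try by constructor.
- by apply: (iffP eqP) => [->|[]].
- by apply: (iffP (IH c)) => [->|[]].
- apply: (iffP andP) => [[/IH1 -> /IH2 ->]//|[<- <-]].
  by split; [apply/IH1|apply/IH2].
- apply: (iffP andP) => [[/IH1 -> /IH2 ->]//|[<- <-]].
  by split; [apply/IH1|apply/IH2].
Qed.

HB.instance Definition _ := hasDecEq.Build BExp bexp_eqP.

(* Atoms of the free Boolean algebra on T = valuations of the primitive tests. *)
Definition atom := {ffun T -> bool}.

Fixpoint beval (b : BExp) (a : atom) : bool :=
  match b with
  | BFalse => false
  | BTrue => true
  | BPrim t => a t
  | BNeg b => ~~ beval b a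
  | BOr b c => beval b a || beval c a
  | BAnd b c => beval b a && beval c a
  end.

Definition atom_le (a : atom) (b : BExp) : bool := beval b a.

Definition BA_equiv (b c : BExp) : Prop := forall a : atom, beval b a = beval c a.

Definition atom_test (a : atom) : BExp :=
  foldr (fun t acc => BAnd (if a t then BPrim t else BNeg (BPrim t)) acc) BTrue (enum T).

End Tests.

Section Exprs.
Variables (T : finType) (Act Out : eqType) (S : pzSemiRingType).

(* Exp ::= p | b | e +_b f | e;f | e^(b) | v | e (+)_{r,s} f *)
Inductive Exp : Type :=
| EAct of Act
| ETest of BExp T
| EGuard of Exp & BExp T & Exp
| ESeq of Exp & Exp
| ELoop of Exp & BExp T
| ERet of Out
| EWsum of Exp & S & S & Exp.

Fixpoint exp_eqb (e f : Exp) : bool :=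
  match e, f with
  | EAct p, EAct q => p == q
  | ETest b, ETest c => b == c
  | EGuard e1 b e2, EGuard f1 c f2 => [&& exp_eqb e1 f1, b == c & exp_eqb e2 f2]
  | ESeq e1 e2, ESeq f1 f2 => exp_eqb e1 f1 && exp_eqb e2 f2
  | ELoop e1 b, ELoop f1 c => exp_eqb e1 f1 && (b == c)
  | ERet v, ERet w => v == w
  | EWsum e1 r s e2, EWsum f1 r' s' f2 =>
      [&& exp_eqb e1 f1, r == r', s == s' & exp_eqb e2 f2]
  | _, _ => false
  end.

Lemma exp_eqP : Equality.axiom exp_eqb.
Proof.
elim=> [p|b|e1 IH1 b e2 IH2|e1 IH1 e2 IH2|e1 IH1 b|v|e1 IH1 r s e2 IH2]
  [q|c|f1 c f2|f1 f2|f1 c|w|f1 r' s' f2] /=; try by constructor.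
- by apply: (iffP eqP) => [->|[]].
- by apply: (iffP eqP) => [->|[]].
- apply: (iffP and3P) => [[/IH1 -> /eqP -> /IH2 ->]//|[<- <- <-]].
  by split; [apply/IH1| |apply/IH2].
- apply: (iffP andP) => [[/IH1 -> /IH2 ->]//|[<- <-]].
  by split; [apply/IH1|apply/IH2].
- apply: (iffP andP) => [[/IH1 -> /eqP ->]//|[<- <-]].
  by split; [apply/IH1|].
- by apply: (iffP eqP) => [->|[]].
- apply: (iffP and4P) => [[/IH1 -> /eqP -> /eqP -> /IH2 ->]//|[<- <- <- <-]].
  by split; [apply/IH1| | |apply/IH2].
Qed.

HB.instance Definition _ := hasDecEq.Build Exp exp_eqP.

Inductive Deriv : Type :=
| Acc | Rej | DOut of Out | DAct of Act & Exp.

Definition deriv_eqb (x y : Deriv) : bool :=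
  match x, y with
  | Acc, Acc => true
  | Rej, Rej => true
  | DOut v, DOut w => v == w
  | DAct p e, DAct q f => (p == q) && (e == f)
  | _, _ => false
  end.

Lemma deriv_eqP : Equality.axiom deriv_eqb.
Proof.
case=> [||v|p e] [||w|q f] /=; try by constructor.
- by apply: (iffP eqP) => [->|[]].
- by apply: (iffP andP) => [[/eqP -> /eqP ->]|[-> ->]].
Qed.

HB.instance Definition _ := hasDecEq.Build Deriv deriv_eqP.

(* Finitely supported maps Deriv -> S are represented by formal finite sums
   (lists of (point, weight) pairs); [mval m] is the map they denote. *)
Definition meas := seq (Deriv * S).
Definition mval (m : meas) (x : Deriv) : S := \sum_(p <- m | p.1 == x) p.2.
Definition mscale (r : S) (m : meas) : meas := [seq (p.1, r * p.2) | p <- m].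
Definition supp (m : meas) (x : Deriv) : bool := mval m x != 0.

Variable star : S -> S.

Fixpoint derivative (e : Exp) (a : atom T) : meas :=
  match e with
  | ETest b => if atom_le a b then [:: (Acc, 1)] else [:: (Rej, 1)]
  | ERet v => [:: (DOut v, 1)]
  | EAct p => [:: (DAct p (ETest (BTrue T)), 1)]
  | EGuard e1 b e2 => if atom_le a b then derivative e1 a else derivative e2 a
  | EWsum e1 r s e2 => mscale r (derivative e1 a) ++ mscale s (derivative e2 a)
  | ESeq e1 e2 =>
      flatten [seq match p.1 with
                   | Acc => mscale p.2 (derivative e2 a)
                   | DAct q e' => [:: (DAct q (ESeq e' e2), p.2)]
                   | x => [:: (x, p.2)]
                   end | p <- derivative e1 a]
  | ELoop e1 b =>
      if atom_le a (BNeg b) then [:: (Acc, 1)]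
      else
        let m := derivative e1 a in
        flatten [seq match p.1 with
                     | Acc => [::]
                     | DAct q e' => [:: (DAct q (ESeq e' (ELoop e1 b)), star (mval m Acc) * p.2)]
                     | x => [:: (x, star (mval m Acc) * p.2)]
                     end | p <- m]
  end.

Fixpoint Eps (e : Exp) (a : atom T) : S :=
  match e with
  | EAct _ => 0
  | ERet _ => 0
  | ETest b => if atom_le a b then 1 else 0
  | EWsum e1 r s e2 => r * Eps e1 a + s * Eps e2 a
  | EGuard e1 b e2 => if atom_le a b then Eps e1 a else Eps e2 a
  | ESeq e1 e2 => Eps e1 a * Eps e2 a
  | ELoop e1 b => if atom_le a (BNeg b) then 1 else 0
  end.

Definition odot (r : S) : Exp := EWsum (ETest (BTrue T)) r 0 (ETest (BFalse T)).

Fixpoint GS (l : seq (atom T)) (F : atom T -> Exp) : Exp :=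
  match l with
  | [::] => ETest (BFalse T)
  | g :: l' => EGuard (F g) (atom_test g) (GS l' F)
  end.

Fixpoint WS (l : seq (S * Exp)) : Exp :=
  match l with
  | [::] => odot 0
  | (r, e) :: l' => EWsum e r 1 (WS l')
  end.

Definition expd (x : Deriv) : Exp :=
  match x with
  | Acc => ETest (BTrue T)
  | Rej => ETest (BFalse T)
  | DOut v => ERet v
  | DAct p f => ESeq (EAct p) f
  end.

Inductive gequiv : Exp -> Exp -> Prop :=
| eq_refl e : gequiv e e
| eq_sym e f : gequiv e f -> gequiv f e
| eq_trans e f g : gequiv e f -> gequiv f g -> gequiv e g
| eq_test b c : BA_equiv b c -> gequiv (ETest b) (ETest c)
| eq_guard e e' b b' f f' : gequiv e e' -> BA_equiv b b' -> gequiv f f' ->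
    gequiv (EGuard e b f) (EGuard e' b' f')
| eq_seq e e' f f' : gequiv e e' -> gequiv f f' -> gequiv (ESeq e f) (ESeq e' f')
| eq_loop e e' b b' : gequiv e e' -> BA_equiv b b' -> gequiv (ELoop e b) (ELoop e' b')
| eq_wsum e e' r s f f' : gequiv e e' -> gequiv f f' ->
    gequiv (EWsum e r s f) (EWsum e' r s f')
| ax_G1 e b : gequiv (EGuard e b e) e
| ax_G2 e b f : gequiv (EGuard e b f) (EGuard (ESeq (ETest b) e) b f)
| ax_G3 e b f : gequiv (EGuard e b f) (EGuard f (BNeg b) e)
| ax_G4 e f g b c : gequiv (EGuard (EGuard e b f) c g) (EGuard e (BAnd b c) (EGuard f c g))
| ax_D1 e f g b r s :
    gequiv (EWsum e r s (EGuard f b g)) (EGuard (EWsum e r s f) b (EWsum e r s g))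
| ax_D2 e f g r s t u :
    gequiv (EWsum e r s (EWsum f t u g)) (EWsum e r 1 (EWsum f (s * t) (s * u) g))
| ax_D3 b e f r s :
    gequiv (ESeq (ETest b) (EWsum e r s f))
          (ESeq (ETest b) (EWsum (ESeq (ETest b) e) r s (ESeq (ETest b) f)))
| ax_S1l e : gequiv (ESeq (ETest (BTrue T)) e) e
| ax_S1r e : gequiv e (ESeq e (ETest (BTrue T)))
| ax_S2 e f g : gequiv (ESeq (ESeq e f) g) (ESeq e (ESeq f g))
| ax_S3 e : gequiv (ESeq (ETest (BFalse T)) e) (ETest (BFalse T))
| ax_S4 e f g r s : gequiv (ESeq (EWsum e r s f) g) (EWsum (ESeq e g) r s (ESeq f g))
| ax_S5 e f g b : gequiv (ESeq (EGuard e b f) g) (EGuard (ESeq e g) b (ESeq f g))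
| ax_S6 v e : gequiv (ESeq (ERet v) e) (ERet v)
| ax_S7 b c : gequiv (ESeq (ETest b) (ETest c)) (ETest (BAnd b c))
| ax_L1 e b : gequiv (ELoop e b) (EGuard (ESeq e (ELoop e b)) b (ETest (BTrue T)))
| ax_C1 : gequiv (odot 1) (ETest (BTrue T))
| ax_C2 e : gequiv (ESeq (odot 0) e) (odot 0)
| ax_W1 e r s : gequiv (EWsum e r s e) (ESeq (odot (r + s)) e)
| ax_W2 e f r s : gequiv (EWsum e r s f) (EWsum f s r e)
| ax_W3 e f g r s t u :
    gequiv (EWsum e r s (EWsum f t u g)) (EWsum (EWsum e r (s * t) f) 1 (s * u) g)
| ax_W4 e f r s u : gequiv (EWsum e (r * u) s f) (EWsum (ESeq (odot u) e) r s f)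
| rule_L2 e f g b c r s :
    gequiv e (EGuard (EWsum f r s (ETest (BTrue T))) c g) ->
    gequiv (ESeq (ETest c) (ELoop e b))
          (ESeq (ETest c) (EGuard (ESeq (odot (star s * r)) (ESeq f (ELoop e b)))
                                  b (ETest (BTrue T))))
| rule_F1 e f g b :
    gequiv g (EGuard (ESeq e g) b f) -> (forall a : atom T, Eps e a = 0) ->
    gequiv g (ESeq (ELoop e b) f).

End Exprs.

(* Under the test of a single atom α, every expression is equivalent to the
   weighted sum of its derivative: α;e ≡ α;⊕_d ∂(e)_α(d)·exp(d), by induction
   on e.  For e;f the weighted sum is pushed through the sequencing and the
   accepting summand is replaced by the expansion of f.  For e^(b) the
   accepting weight s = ∂(e)_α(acc) is split off, e ≡ (g ⊕_{1,s} 1) +_α e with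
   g the sum of the other summands, and rule (L2) yields the factor s^*.
   Weighted sums are compared through the total weight they give to each
   point, so order and repetition of summands are irrelevant.  Equivalence
   under every atom is equivalence, and under α the guarded sum reduces to its
   α-summand. *)

From Pilot Require Import Defs.
From HB Require Import structures.
From mathcomp Require Import all_boot all_order all_algebra.
From Stdlib Require Import Setoid Morphisms.
Set Implicit Arguments. Unset Strict Implicit. Unset Printing Implicit Defensive.
Import GRing.Theory.
Local Open Scope ring_scope.

#[export] Instance BA_equiv_Equivalence (T : finType) : Equivalence (@BA_equiv T).
Proof. by split=> [b a | b c bc a | b c d bc cd a]; rewrite ?bc ?cd. Qed.

Section Congruence.
Variables (T : finType) (Act Out : eqType) (S : pzSemiRingType) (star : S -> S).
Local Notation equiv := (@gequiv T Act Out S star).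

#[export] Instance gequiv_Equivalence : Equivalence equiv.
Proof. by split; [exact: Defs.eq_refl | exact: Defs.eq_sym | exact: Defs.eq_trans]. Qed.

#[export] Instance ETest_proper : Proper (@BA_equiv T ==> equiv) (@ETest T Act Out S).
Proof. by move=> b c; apply: eq_test. Qed.

#[export] Instance ESeq_proper : Proper (equiv ==> equiv ==> equiv) (@ESeq T Act Out S).
Proof. by move=> e e' ee' f f' ff'; apply: eq_seq. Qed.

#[export] Instance EGuard_proper :
  Proper (equiv ==> @BA_equiv T ==> equiv ==> equiv) (@EGuard T Act Out S).
Proof. by move=> e e' ee' b b' bb' f f' ff'; apply: eq_guard. Qed.

#[export] Instance EWsum_proper :
  Proper (equiv ==> eq ==> eq ==> equiv ==> equiv) (@EWsum T Act Out S).
Proof. by move=> e e' ee' r _ <- s _ <- f f' ff'; apply: eq_wsum. Qed.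

End Congruence.

#[export] Hint Resolve Defs.eq_refl : core.

Section Expansion.
Variables (T : finType) (Act Out : eqType) (S : pzSemiRingType) (star : S -> S).

Local Notation Exp := (Exp T Act Out S).
Local Notation meas := (meas T Act Out S).
Local Notation acc := (Acc T Act Out S).
Local Notation tst b := (@ETest T Act Out S b).
Local Notation one := (tst (BTrue T)).
Local Notation zero := (tst (BFalse T)).
Local Notation od := (@odot T Act Out S).
Local Notation "e === f" := (@gequiv T Act Out S star e f) (at level 70).
Local Notation "e ={ b }= f" := (ESeq (tst b) e === ESeq (tst b) f)
  (at level 70, format "e  ={ b }=  f").

Lemma guard_false (x y : Exp) : EGuard x (BFalse T) y === y.
Proof. by rewrite ax_G2 ax_S3 -(ax_S3 star y) -ax_G2 ax_G1. Qed.

Lemma guard_true (x y : Exp) : EGuard x (BTrue T) y === x.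
Proof.
have nT : BA_equiv (BNeg (BTrue T)) (BFalse T) by [].
by rewrite ax_G3 nT guard_false.
Qed.

Lemma guard_congrl b (x x' y : Exp) : x ={b}= x' -> EGuard x b y === EGuard x' b y.
Proof. by move=> xx'; rewrite ax_G2 xx' -ax_G2. Qed.

Lemma guard_congrr b (x y y' : Exp) : y ={BNeg b}= y' -> EGuard x b y === EGuard x b y'.
Proof. by move=> yy'; rewrite ax_G3 (guard_congrl _ yy') -ax_G3. Qed.

Lemma test_under d b c : (forall a, beval d a -> beval b a = beval c a) -> tst b ={d}= tst c.
Proof.
move=> bc; rewrite !ax_S7; apply: eq_test => a /=.
by case: (beval d a) (bc a) => [/(_ isT) -> | _].
Qed.

Lemma test_guard b : tst b === EGuard one b zero.
Proof.
transitivity (EGuard (tst b) b (tst b)); first by rewrite ax_G1.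
transitivity (EGuard one b (tst b)).
  by apply: guard_congrl; apply: test_under => a ->.
by apply: guard_congrr; apply: test_under => a /= /negbTE ->.
Qed.

Lemma seq_testE b (x : Exp) : ESeq (tst b) x === EGuard x b zero.
Proof. by rewrite (test_guard b) ax_S5 ax_S1l ax_S3. Qed.

Lemma guard_under d b b' (x y : Exp) : (forall a, beval d a -> beval b a = beval b' a) ->
  EGuard x b y ={d}= EGuard x b' y.
Proof.
move=> bb'; rewrite !seq_testE !ax_G4; apply: eq_guard => // a /=.
by case: (beval d a) (bb' a) => [/(_ isT) -> | _]; rewrite ?andbF.
Qed.

Lemma guard_underl d b (x y : Exp) : (forall a, beval d a -> beval b a) -> EGuard x b y ={d}= x.
Proof.
move=> db; rewrite -[x in _ === ESeq _ x](guard_true x y).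
by apply: guard_under => a /db ->.
Qed.

Lemma guard_underr d b (x y : Exp) : (forall a, beval d a -> ~~ beval b a) ->
  EGuard x b y ={d}= y.
Proof.
move=> db; rewrite -[y in _ === ESeq _ y](guard_false x y).
by apply: guard_under => a /db /negbTE ->.
Qed.

Lemma guard_or b c (x z : Exp) : EGuard x (BOr b c) z === EGuard x b (EGuard x c z).
Proof.
have bbc : BA_equiv (BAnd b (BOr b c)) b by move=> a /=; case: (beval b a).
transitivity (EGuard (EGuard x b x) (BOr b c) z); first by rewrite ax_G1.
rewrite ax_G4 bbc; apply: guard_congrr.
by apply: guard_under => a /= /negbTE ->.
Qed.

Lemma under_or b c (x y : Exp) : x ={b}= y -> x ={c}= y -> x ={BOr b c}= y.
Proof.
move=> xy_b xy_c; rewrite !seq_testE !guard_or -!seq_testE xy_c.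
exact: guard_congrl.
Qed.

Lemma under_true (x y : Exp) : x ={BTrue T}= y -> x === y.
Proof. by rewrite !ax_S1l. Qed.

Lemma atom_testE (g a : atom T) : beval (atom_test g) a = (a == g).
Proof.
have -> : beval (atom_test g) a = all (fun t => a t == g t) (enum T).
  by rewrite /atom_test; elim: (enum T) => //= t ts ->; case: (g t) => /=; case: (a t).
by apply/allP/eqP => [ag | ->//]; apply/ffunP => t; apply/eqP/ag; rewrite mem_enum.
Qed.

Lemma under_atoms (x y : Exp) : (forall a, x ={atom_test a}= y) -> x === y.
Proof.
pose some_atom l := foldr (fun g b => BOr (atom_test g) b) (BFalse T) l.
have all_atoms : BA_equiv (BTrue T) (some_atom (enum (atom T))).
  move=> a; transitivity (a \in enum (atom T)); first by rewrite mem_enum.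
  by elim: (enum _) => // g l IH; rewrite in_cons /= atom_testE IH.
move=> xy; apply: under_true; rewrite all_atoms.
by elim: (enum _) => [|g l IH] /=; [rewrite !ax_S3 | apply: under_or].
Qed.

Lemma GS_under (l : seq (atom T)) (F : atom T -> Exp) a :
  a \in l -> GS l F ={atom_test a}= F a.
Proof.
elim: l => //= g l IH; rewrite in_cons; case: eqVneq => [-> _ | ag /IH <-].
  exact: guard_underl.
by apply: guard_underr => a'; rewrite !atom_testE => /eqP ->.
Qed.

Lemma seq_odot1 (x : Exp) : ESeq (od 1) x === x.
Proof. by rewrite ax_C1 ax_S1l. Qed.

Lemma seq_odot u (x : Exp) : ESeq (od u) x === EWsum x u 0 zero.
Proof. by rewrite ax_S4 ax_S1l ax_S3. Qed.

Lemma wsum_self10 (x : Exp) : EWsum x 1 0 x === x.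
Proof. by rewrite ax_W1 addr0 seq_odot1. Qed.

Lemma wsum_r0 r (y z : Exp) : EWsum y r 0 z === EWsum y r 1 (od 0).
Proof. by rewrite -(wsum_self10 z) ax_D2 !mul0r ax_W1 addr0 ax_C2. Qed.

Lemma wsum10 (y z : Exp) : EWsum y 1 0 z === y.
Proof. by rewrite wsum_r0 -(wsum_r0 1 y y) wsum_self10. Qed.

Lemma wsum01 (x y : Exp) : EWsum x 0 1 y === y.
Proof. by rewrite ax_W2 wsum10. Qed.

Lemma seq_odot_wsum u (x y : Exp) t v :
  ESeq (od u) (EWsum x t v y) === EWsum x (u * t) (u * v) y.
Proof. by rewrite seq_odot ax_W2 ax_D2 wsum01. Qed.

Lemma wsum_odot0l r s (x : Exp) : EWsum (od 0) r s x === ESeq (od s) x.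
Proof. by rewrite -(ax_C2 star x) -ax_W4 mulr0 ax_W1 add0r. Qed.

Lemma wsumA (x y z : Exp) t r s :
  EWsum (EWsum x t 1 y) r s z === EWsum x (r * t) 1 (EWsum y r s z).
Proof.
have := ax_W3 star x y z (r * t) 1 r s; rewrite !mul1r => ->.
by rewrite -{1}(mul1r r) ax_W4 seq_odot_wsum mulr1.
Qed.

Lemma wsum_merge (x w : Exp) r c : EWsum x r 1 (EWsum x c 1 w) === EWsum x (r + c) 1 w.
Proof.
have := ax_W3 star x x w r 1 c 1; rewrite !mul1r => ->.
by rewrite ax_W1 -ax_W4 mul1r.
Qed.

Lemma wsum_swap (x y w : Exp) r t :
  EWsum x r 1 (EWsum y t 1 w) === EWsum y t 1 (EWsum x r 1 w).
Proof.
have := ax_W3 star y x w t 1 r 1; have := ax_W3 star x y w r 1 t 1.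
by rewrite !mul1r => -> ->; rewrite (ax_W2 star x y).
Qed.

Lemma wsum_under d (x x' y y' : Exp) r s :
  x ={d}= x' -> y ={d}= y' -> EWsum x r s y ={d}= EWsum x' r s y'.
Proof. by move=> xx' yy'; rewrite ax_D3 xx' yy' -ax_D3. Qed.

Definition sum_exp (m : meas) : Exp := WS [seq (p.2, expd p.1) | p <- m].

Lemma sum_exp_cons x w m : sum_exp ((x, w) :: m) = EWsum (expd x) w 1 (sum_exp m).
Proof. by []. Qed.

Lemma sum_exp1 x : sum_exp [:: (x, 1)] === expd x.
Proof. by rewrite sum_exp_cons -(wsum_r0 1 (expd x) (expd x)) wsum_self10. Qed.

Lemma mscale1 (m : meas) : mscale 1 m = m.
Proof. by rewrite /mscale -[RHS]map_id; apply: eq_map => -[x w]; rewrite mul1r. Qed.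

Lemma seq_odot_sum_exp u m : ESeq (od u) (sum_exp m) === sum_exp (mscale u m).
Proof.
elim: m => [|[x w] m IH].
  by have := seq_odot_wsum u one zero 0 0; rewrite mulr0.
rewrite sum_exp_cons seq_odot_wsum mulr1 ax_W2 -{1}(mul1r u) ax_W4 IH.
exact: ax_W2.
Qed.

Lemma sum_exp_cat r s m1 m2 :
  EWsum (sum_exp m1) r s (sum_exp m2) === sum_exp (mscale r m1 ++ mscale s m2).
Proof.
elim: m1 => [|[x w] m1 IH]; first by rewrite wsum_odot0l seq_odot_sum_exp.
by rewrite sum_exp_cons wsumA IH.
Qed.

Lemma sum_exp_seq m (g : Exp) :
  ESeq (sum_exp m) g === WS [seq (p.2, ESeq (expd p.1) g) | p <- m].
Proof. by elim: m => [|[x w] m IH]; [exact: ax_C2 | rewrite sum_exp_cons ax_S4 IH]. Qed.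

Lemma WS_under d m (F G : Deriv T Act Out S -> Exp) :
  (forall x, x \in map fst m -> F x ={d}= G x) ->
  WS [seq (p.2, F p.1) | p <- m] ={d}= WS [seq (p.2, G p.1) | p <- m].
Proof.
elim: m => [|[x w] m IH] //= FG; apply: wsum_under; first by apply: FG; rewrite mem_head.
by apply: IH => y ym; apply: FG; rewrite in_cons ym orbT.
Qed.

Definition bind (m : meas) (k : Deriv T Act Out S -> meas) : meas :=
  flatten [seq mscale p.2 (k p.1) | p <- m].

Lemma WS_sum_exp m k : WS [seq (p.2, sum_exp (k p.1)) | p <- m] === sum_exp (bind m k).
Proof. by elim: m => [|[x w] m IH] //=; rewrite IH sum_exp_cat mscale1. Qed.

Lemma seq_sum_exp_under d m (g : Exp) k :
  (forall x, x \in map fst m -> ESeq (expd x) g ={d}= sum_exp (k x)) ->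
  ESeq (sum_exp m) g ={d}= sum_exp (bind m k).
Proof.
move=> gk; rewrite sum_exp_seq -WS_sum_exp.
exact: (@WS_under d m (fun x => ESeq (expd x) g) (fun x => sum_exp (k x))).
Qed.

Lemma mval_cons x w (m : meas) y :
  mval ((x, w) :: m) y = if x == y then w + mval m y else mval m y.
Proof. by rewrite /mval big_cons. Qed.

Lemma sum_exp0 (s : seq (Deriv T Act Out S)) : sum_exp [seq (x, 0) | x <- s] === od 0.
Proof. by elim: s => //= x s IH; rewrite sum_exp_cons IH wsum01. Qed.

Lemma sum_exp_add x r (w : Deriv T Act Out S -> S) s : uniq s -> x \in s ->
  EWsum (expd x) r 1 (sum_exp [seq (y, w y) | y <- s]) ===
  sum_exp [seq (y, if x == y then r + w y else w y) | y <- s].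
Proof.
elim: s => //= y s IH /andP [ys us]; rewrite in_cons !sum_exp_cons.
case: eqVneq => [-> _ | xy /= xs]; last by rewrite wsum_swap IH.
have -> : [seq (z, if y == z then r + w z else w z) | z <- s] = [seq (z, w z) | z <- s].
  by apply/eq_in_map => z; case: eqVneq => // <-; rewrite (negbTE ys).
exact: wsum_merge.
Qed.

Lemma sum_exp_mval m s : uniq s -> {subset map fst m <= s} ->
  sum_exp m === sum_exp [seq (x, mval m x) | x <- s].
Proof.
elim: m => [|[x w] m IH] us ms.
  by rewrite (@eq_map _ _ _ (fun x => (x, 0))) ?sum_exp0 // => x; rewrite /mval big_nil.
rewrite sum_exp_cons IH ?sum_exp_add ?(ms x) ?mem_head //.
  by rewrite (eq_map (fun y => congr1 (pair y) (mval_cons x w m y))).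
by move=> y ym; apply: ms; rewrite in_cons ym orbT.
Qed.

Lemma eq_sum_exp m1 m2 : mval m1 =1 mval m2 -> sum_exp m1 === sum_exp m2.
Proof.
move=> m12; pose s := undup (map fst (m1 ++ m2)).
have us : uniq s by apply: undup_uniq.
rewrite (@sum_exp_mval m1 s) ?(@sum_exp_mval m2 s) //; last first.
- by move=> x xm; rewrite mem_undup map_cat mem_cat xm.
- by move=> x xm; rewrite mem_undup map_cat mem_cat xm orbT.
by under eq_map do rewrite m12.
Qed.

Lemma mval_split (m : meas) y :
  mval m =1 mval ([seq p <- m | p.1 != y] ++ [:: (y, mval m y)]).
Proof.
move=> x; rewrite /mval big_cat big_filter_cond big_cons big_nil /= addr0.
rewrite (bigID (fun p => p.1 == y)) /= addrC; congr (_ + _).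
  by apply: eq_bigl => p; rewrite andbC.
case: eqVneq => [-> | yx]; first by apply: eq_bigl => p; rewrite andb_idl // => /eqP.
by rewrite big_pred0 // => p; apply/negbTE/andP => -[/eqP -> /eqP xy]; rewrite xy eqxx in yx.
Qed.

Lemma sum_exp_split m y :
  sum_exp m === EWsum (sum_exp [seq p <- m | p.1 != y]) 1 (mval m y) (expd y).
Proof.
rewrite -sum_exp1 sum_exp_cat mscale1; apply: eq_sum_exp.
by rewrite /mscale /= mulr1; apply: mval_split.
Qed.

Lemma mval_supp (m : meas) s : uniq s -> (forall x, (x \in s) = supp m x) ->
  mval [seq (x, mval m x) | x <- s] =1 mval m.
Proof.
move=> us sm y; rewrite [LHS]/mval big_map /=.
have [ys | nys] := boolP (y \in s).
  by rewrite -big_filter filter_pred1_uniq // big_seq1.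
move: (nys); rewrite sm /supp negbK => /eqP ->.
by rewrite big_hasC // has_pred1.
Qed.

(* The map c_{α,f} in the derivative of e;f, with [macc] standing for ∂(f)_α. *)
Definition seq_cont (g : Exp) (macc : meas) (x : Deriv T Act Out S) : meas :=
  match x with
  | Acc => macc
  | DAct q f => [:: (DAct q (ESeq f g), 1)]
  | _ => [:: (x, 1)]
  end.

Lemma expd_seq (g : Exp) macc x : x != acc -> ESeq (expd x) g === sum_exp (seq_cont g macc x).
Proof.
by case: x => [||v|q f] // _; rewrite sum_exp1; [exact: ax_S3 | exact: ax_S6 | exact: ax_S2].
Qed.

Lemma derivative_seq (e f : Exp) a :
  derivative star (ESeq e f) a = bind (derivative star e a) (seq_cont f (derivative star f a)).
Proof. by congr flatten; apply: eq_map => -[[||v|q e'] w]; rewrite /mscale /= ?mulr1. Qed.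

Lemma derivative_loop (e : Exp) b a : beval b a ->
  derivative star (ELoop e b) a =
  mscale (star (mval (derivative star e a) acc))
    (bind [seq p <- derivative star e a | p.1 != acc] (seq_cont (ELoop e b) [::])).
Proof.
move=> ba; rewrite /= /atom_le /= ba /=.
set m := derivative star e a; set u := star _; clearbody u.
by elim: m => //= -[[||v|q e'] w] m ->; rewrite /mscale /= ?mulr1.
Qed.

Lemma seq_expansion (e f : Exp) a :
  e ={atom_test a}= sum_exp (derivative star e a) ->
  f ={atom_test a}= sum_exp (derivative star f a) ->
  ESeq e f ={atom_test a}= sum_exp (derivative star (ESeq e f) a).
Proof.
move=> ee ff; rewrite derivative_seq -ax_S2 ee ax_S2.
apply: seq_sum_exp_under => x _; have [-> | xacc] := eqVneq x acc.
  by rewrite ax_S1l.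
by rewrite expd_seq.
Qed.

Lemma loop_expansion (e : Exp) b a :
  e ={atom_test a}= sum_exp (derivative star e a) ->
  ELoop e b ={atom_test a}= sum_exp (derivative star (ELoop e b) a).
Proof.
move=> ee; have [ba | nba] := boolP (beval b a); last first.
  rewrite /= /atom_le /= nba sum_exp1 ax_L1.
  by apply: guard_underr => a'; rewrite atom_testE => /eqP ->.
set m := derivative star e a; set m' := [seq p <- m | p.1 != acc].
have e_split : e === EGuard (EWsum (sum_exp m') 1 (mval m acc) one) (atom_test a) e.
  transitivity (EGuard e (atom_test a) e); first by rewrite ax_G1.
  by apply: guard_congrl; rewrite ee (sum_exp_split m acc).
rewrite (rule_L2 b e_split) mulr1 (derivative_loop _ ba) -/m -seq_odot_sum_exp.
rewrite guard_underl => [|a']; last by rewrite atom_testE => /eqP ->.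
apply: eq_seq => //; apply: eq_seq => //; apply: under_true.
apply: seq_sum_exp_under => x /mapP [p]; rewrite mem_filter => /andP [pacc _] ->.
by rewrite expd_seq.
Qed.

Lemma atom_expansion (e : Exp) a : e ={atom_test a}= sum_exp (derivative star e a).
Proof.
elim: e a => [p|b|e1 IH1 b e2 IH2|e1 IH1 e2 IH2|e IH b|v|e1 IH1 r s e2 IH2] a /=.
- by rewrite sum_exp1 /= -ax_S1r.
- rewrite /atom_le; case: ifP => ba; rewrite sum_exp1;
    by apply: test_under => a'; rewrite atom_testE => /eqP ->.
- rewrite /atom_le; case: ifP => ba; [rewrite -IH1 | rewrite -IH2].
    by apply: guard_underl => a'; rewrite atom_testE => /eqP ->.
  by apply: guard_underr => a'; rewrite atom_testE => /eqP ->; rewrite ba.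
- exact: seq_expansion.
- exact: loop_expansion.
- by rewrite sum_exp1.
- by rewrite -sum_exp_cat; apply: wsum_under.
Qed.

End Expansion.

Theorem mainTheorem8 (T : finType) (Act Out : eqType) (S : pzSemiRingType)
  (star : S -> S)
  (Hpositive : forall x y : S, x + y = 0 -> x = 0 /\ y = 0)
  (Hrefinement : forall x y z w : S, x + y = z + w ->
     exists s t u v : S, [/\ s + t = x, s + u = z, u + v = y & t + v = w])
  (Hconway1 : forall a b : S, star (a + b) = star a * star (b * star a))
  (Hconway2 : forall a b : S, star (a * b) = 1 + a * star (b * a) * b)
  (e : Exp T Act Out S)
  (ats : seq (atom T)) (Hats_uniq : uniq ats) (Hats_all : forall a : atom T, a \in ats)
  (sup : atom T -> seq (Deriv T Act Out S))
  (Hsup_uniq : forall a, uniq (sup a))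
  (Hsup : forall a d, (d \in sup a) = supp (derivative star e a) d) :
  gequiv star e
    (GS ats (fun a => WS [seq (mval (derivative star e a) d, expd d) | d <- sup a])).
Proof.
apply: under_atoms => a; rewrite (GS_under _ _ (Hats_all a)) atom_expansion.
set m := derivative star e a.
have -> : [seq (mval m d, expd d) | d <- sup a] =
          [seq (p.2, expd p.1) | p <- [seq (d, mval m d) | d <- sup a]].
  by rewrite -map_comp.
apply: eq_seq => //; apply: eq_sum_exp => d.
by rewrite (mval_supp (Hsup_uniq a) (Hsup a)).
Qed.
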